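(* Suppose that (i) $K:\mathbb R^p\rightrightarrows\mathbb R^n$ is concave, and (ii) $f:\mathbb R^p\times\mathbb R^n\times\mathbb R^n\to\mathbb R^m$ is $C$-concave. Then $\nu(\xi,x)=\sup_{z\in K(\xi)}\operatorname{dist}(f(\xi,x,z),C)$ is a convex function (with values in $[0,+\infty]$) on $\mathbb R^p\times\mathbb R^n$.
   Context: $C\subset\mathbb R^m$ is a nontrivial closed, convex, pointed cone; $K$ has closed graph and nonempty values (standing assumption). A mapping $g:X\to Y$ is $C$-concave if $g(tx_1+(1-t)x_2)-tg(x_1)-(1-t)g(x_2)\in C$ for all $x_1,x_2\in X$, $t\in[0,1]$. A set-valued mapping $F:X\rightrightarrows Y$ is concave if $F(tx_1+(1-t)x_2)\subseteq tF(x_1)+(1-t)F(x_2)$ for all $x_1,x_2$, $t\in[0,1]$. *)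

From HB Require Import structures.
From mathcomp Require Import all_boot all_order all_algebra.
From mathcomp Require Import all_classical all_reals all_analysis.
Set Implicit Arguments. Unset Strict Implicit. Unset Printing Implicit Defensive.
Import Order.TTheory GRing.Theory Num.Theory.
Import numFieldNormedType.Exports.
Local Open Scope classical_set_scope.
Local Open Scope ring_scope.

Section Defs.
Variable R : realType.

Definition enorm (k : nat) (v : 'rV[R]_k) : R :=
  Num.sqrt (\sum_(i < k) (v ord0 i) ^+ 2).

Definition edist (k : nat) (y : 'rV[R]_k) (C : set 'rV[R]_k) : \bar R :=
  ereal_inf [set (enorm (y - c))%:E | c in C].

Definition is_cone (k : nat) (C : set 'rV[R]_k) : Prop :=
  C 0 /\ forall (l : R) c, 0 <= l -> C c -> C (l *: c).
Definition is_convex_set (k : nat) (C : set 'rV[R]_k) : Prop :=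
  forall (t : R) a b, 0 <= t <= 1 -> C a -> C b -> C (t *: a + (1 - t) *: b).
Definition is_pointed (k : nat) (C : set 'rV[R]_k) : Prop :=
  forall c, C c -> C (- c) -> c = 0.
Definition nontrivial_set (k : nat) (C : set 'rV[R]_k) : Prop :=
  exists c, C c /\ c <> 0.

Definition C_concave (p n m : nat) (C : set 'rV[R]_m)
  (f : 'rV[R]_p -> 'rV[R]_n -> 'rV[R]_n -> 'rV[R]_m) : Prop :=
  forall (t : R) xi1 x1 z1 xi2 x2 z2, 0 <= t <= 1 ->
    C (f (t *: xi1 + (1 - t) *: xi2) (t *: x1 + (1 - t) *: x2)
         (t *: z1 + (1 - t) *: z2)
       - t *: f xi1 x1 z1 - (1 - t) *: f xi2 x2 z2).

Definition sv_concave (p n : nat) (K : 'rV[R]_p -> set 'rV[R]_n) : Prop :=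
  forall (t : R) a b, 0 <= t <= 1 ->
    forall z, K (t *: a + (1 - t) *: b) z ->
      exists z1 z2, K a z1 /\ K b z2 /\ z = t *: z1 + (1 - t) *: z2.

Definition closed_graph (p n : nat) (K : 'rV[R]_p -> set 'rV[R]_n) : Prop :=
  closed [set q : 'rV[R]_p * 'rV[R]_n | K q.1 q.2].

Definition nu (p n m : nat) (K : 'rV[R]_p -> set 'rV[R]_n)
  (f : 'rV[R]_p -> 'rV[R]_n -> 'rV[R]_n -> 'rV[R]_m) (C : set 'rV[R]_m)
  (xi : 'rV[R]_p) (x : 'rV[R]_n) : \bar R :=
  ereal_sup [set edist (f xi x z) C | z in K xi].

Definition ext_convex (p n : nat) (g : 'rV[R]_p -> 'rV[R]_n -> \bar R) : Prop :=
  forall (t : R) (xi1 xi2 : 'rV[R]_p) (x1 x2 : 'rV[R]_n), 0 < t < 1 ->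
    (g (t *: xi1 + (1 - t) *: xi2)%R (t *: x1 + (1 - t) *: x2)%R
      <= t%:E * g xi1 x1 + (1 - t)%:E * g xi2 x2)%E.

End Defs.

From Pilot Require Import Defs.
From HB Require Import structures.
From mathcomp Require Import all_boot all_order all_algebra.
From mathcomp Require Import all_classical all_reals all_analysis.
From mathcomp Require Import lra ring.
Import Order.TTheory GRing.Theory Num.Theory.
Import numFieldNormedType.Exports.
Local Open Scope classical_set_scope.
Local Open Scope ring_scope.

(* The distance to a convex cone C is a convex function, and it can only
   decrease when a point of C is added, since C + C is contained in C.  By
   C-concavity, f at a convex combination of (xi1, x1, z1) and (xi2, x2, z2) is
   the same convex combination of the values plus a point of C, and concavity of
   K says that every z in K at the combined base point arises from such z1, z2;
   hence each distance entering nu at the combined point is bounded by the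
   convex combination of two distances entering nu at the end points. *)

Section EuclideanNorm.
Context {R : realType}.

Lemma sumr_sqr_ge0 {k} (u : 'I_k -> R) : 0 <= \sum_(i < k) u i ^+ 2.
Proof. by apply: sumr_ge0 => i _; rewrite sqr_ge0. Qed.

Lemma sumr_mul_eq0 {k} (u v : 'I_k -> R) :
  \sum_(i < k) u i ^+ 2 = 0 -> \sum_(i < k) u i * v i = 0.
Proof.
move/eqP; rewrite psumr_eq0 => [/allP u0|i _]; last exact: sqr_ge0.
rewrite big1 // => i _.
by have /= := u0 i (mem_index_enum _); rewrite sqrf_eq0 => /eqP ->; rewrite mul0r.
Qed.

Lemma cauchy_schwarz_sum {k} (u v : 'I_k -> R) :
  \sum_(i < k) u i * v i <=
  Num.sqrt (\sum_(i < k) u i ^+ 2) * Num.sqrt (\sum_(i < k) v i ^+ 2).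
Proof.
set Su := \sum_(i < k) u i ^+ 2; set Sv := \sum_(i < k) v i ^+ 2.
set a := Num.sqrt Su; set b := Num.sqrt Sv.
have a2 : a ^+ 2 = Su by rewrite sqr_sqrtr ?sumr_sqr_ge0.
have b2 : b ^+ 2 = Sv by rewrite sqr_sqrtr ?sumr_sqr_ge0.
have [a0|a_neq0] := eqVneq a 0.
  by rewrite sumr_mul_eq0 ?a0 ?mul0r // -/Su -a2 a0 expr0n.
have [b0|b_neq0] := eqVneq b 0.
  under eq_bigr do rewrite mulrC.
  by rewrite sumr_mul_eq0 ?b0 ?mulr0 // -/Sv -b2 b0 expr0n.
have ab_gt0 : 0 < a * b by rewrite mulr_gt0 // lt0r ?a_neq0 ?b_neq0 sqrtr_ge0.
(* AM-GM termwise: [2 a b u_i v_i <= b^2 u_i^2 + a^2 v_i^2]. *)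
have amgm : (2 * (a * b)) * \sum_(i < k) u i * v i <=
            \sum_(i < k) (b ^+ 2 * u i ^+ 2 + a ^+ 2 * v i ^+ 2).
  rewrite mulr_sumr; apply: ler_sum => i _.
  have := sqr_ge0 (b * u i - a * v i); nra.
rewrite big_split /= -!mulr_sumr -/Su -/Sv -a2 -b2 in amgm.
rewrite -(ler_pM2l (_ : 0 < 2 * (a * b))); last by rewrite mulr_gt0.
by apply: le_trans amgm _; nra.
Qed.

Lemma enorm_ge0 {k} (u : 'rV[R]_k) : 0 <= enorm u.
Proof. exact: sqrtr_ge0. Qed.

Lemma enormZ {k} (l : R) (u : 'rV[R]_k) : 0 <= l -> enorm (l *: u) = l * enorm u.
Proof.
move=> l0; rewrite /enorm.
have -> : \sum_(i < k) (l *: u) ord0 i ^+ 2 = l ^+ 2 * \sum_(i < k) u ord0 i ^+ 2.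
  by rewrite mulr_sumr; apply: eq_bigr => i _; rewrite mxE exprMn.
by rewrite sqrtrM ?sqr_ge0 // sqrtr_sqr ger0_norm.
Qed.

Lemma enormD {k} (u v : 'rV[R]_k) : enorm (u + v) <= enorm u + enorm v.
Proof.
rewrite /enorm -[X in _ <= X]ger0_norm ?addr_ge0 ?sqrtr_ge0 //.
rewrite -sqrtr_sqr; apply: ler_wsqrtr.
have -> : \sum_(i < k) (u + v) ord0 i ^+ 2 =
   \sum_(i < k) u ord0 i ^+ 2 + 2 * \sum_(i < k) u ord0 i * v ord0 i
   + \sum_(i < k) v ord0 i ^+ 2.
  rewrite mulr_sumr -!big_split /=; apply: eq_bigr => i _; rewrite mxE; ring.
rewrite sqrrD !sqr_sqrtr ?(sumr_sqr_ge0 (fun i => _ ord0 i)) //.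
have := cauchy_schwarz_sum (fun i => u ord0 i) (fun i => v ord0 i); lra.
Qed.

End EuclideanNorm.

Definition dist_to {R : realType} {k} (C : set 'rV[R]_k) (y : 'rV[R]_k) : R :=
  inf [set enorm (y - c) | c in C].

Section DistanceToSet.
Context {R : realType} {k : nat} {C : set 'rV[R]_k}.
Hypothesis C_neq0 : C !=set0.

Let dist_to_lbound y : has_lbound [set enorm (y - c) | c in C].
Proof. by exists 0 => _ [c _ <-]; exact: enorm_ge0. Qed.

Let dist_to_neq0 y : [set enorm (y - c) | c in C] !=set0.
Proof. by have [c Cc] := C_neq0; exists (enorm (y - c)), c. Qed.

Lemma edist_dist_to y : Defs.edist y C = (dist_to C y)%:E.
Proof.
by rewrite /Defs.edist /dist_to -ereal_inf_EFin ?image_comp ?dist_to_lbound.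
Qed.

Lemma dist_to_le y c : C c -> dist_to C y <= enorm (y - c).
Proof. by move=> Cc; apply: ge_inf; [exact: dist_to_lbound | exists c]. Qed.

Lemma le_dist_to y d : (forall c, C c -> d <= enorm (y - c)) -> d <= dist_to C y.
Proof. by move=> hd; apply: lb_le_inf => // _ [c Cc <-]; exact: hd. Qed.

Lemma dist_to_convex (t : R) a b : is_convex_set C -> 0 < t < 1 ->
  dist_to C (t *: a + (1 - t) *: b) <= t * dist_to C a + (1 - t) * dist_to C b.
Proof.
move=> Cconvex /andP[t_gt0 t_lt1].
have t'_gt0 : 0 < 1 - t by rewrite subr_gt0.
have t01 : 0 <= t <= 1 by rewrite !ltW.
set D := dist_to C _.
have mix_le ca cb : C ca -> C cb ->
    D <= t * enorm (a - ca) + (1 - t) * enorm (b - cb).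
  move=> Cca Ccb; apply: le_trans (dist_to_le _ _ (Cconvex t ca cb t01 Cca Ccb)) _.
  have -> : t *: a + (1 - t) *: b - (t *: ca + (1 - t) *: cb)
      = t *: (a - ca) + (1 - t) *: (b - cb).
    by apply/rowP => i; rewrite !mxE; ring.
  by apply: le_trans (enormD _ _) _; rewrite !enormZ // ltW.
(* Take the infimum over ca, then over cb, dividing out the positive weights. *)
have mix_le_b cb : C cb -> D <= t * dist_to C a + (1 - t) * enorm (b - cb).
  move=> Ccb; rewrite -lerBlDr -ler_pdivrMl //.
  apply: le_dist_to => ca Cca; rewrite ler_pdivrMl // lerBlDr.
  exact: mix_le.
rewrite -lerBlDl -ler_pdivrMl //.
apply: le_dist_to => cb Ccb; rewrite ler_pdivrMl // lerBlDl.
exact: mix_le_b.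
Qed.

Lemma dist_to_addr_le y c : (forall a b, C a -> C b -> C (a + b)) -> C c ->
  dist_to C (y + c) <= dist_to C y.
Proof.
move=> Cadd Cc; apply: le_dist_to => c' Cc'.
apply: le_trans (dist_to_le _ _ (Cadd _ _ Cc' Cc)) _.
by rewrite opprD addrACA subrr addr0.
Qed.

End DistanceToSet.

Lemma convex_cone_addr_closed {R : realType} {k} {C : set 'rV[R]_k} :
  is_cone C -> is_convex_set C -> forall a b, C a -> C b -> C (a + b).
Proof.
move=> [_ Cscale] Cconvex a b Ca Cb.
have half01 : 0 <= (2^-1 : R) <= 1 by rewrite invr_ge0 invf_le1 ?ler0n ?ler1n.
have := Cscale 2 _ (ler0n _ 2) (Cconvex _ a b half01 Ca Cb).
have -> : (1 - 2^-1 : R) = 2^-1 by field.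
by rewrite scalerDr !scalerA divff ?pnatr_eq0 // !scale1r.
Qed.

Theorem mainTheorem4 (R : realType) (p n m : nat) (C : set 'rV[R]_m)
  (K : 'rV[R]_p -> set 'rV[R]_n)
  (f : 'rV[R]_p -> 'rV[R]_n -> 'rV[R]_n -> 'rV[R]_m)
  (hCcl : closed C) (hCcone : is_cone C) (hCcvx : is_convex_set C)
  (hCpt : is_pointed C) (hCnt : nontrivial_set C)
  (hKgr : closed_graph K) (hKne : forall xi, K xi !=set0)
  (hK : sv_concave K) (hf : C_concave C f) :
  ext_convex (nu K f C).
Proof.
move=> t xi1 xi2 x1 x2 t01.
have C_neq0 : C !=set0 by exists 0; case: hCcone.
have t01w : 0 <= t <= 1 by case/andP: t01 => ? ?; rewrite !ltW.
have edist_le_nu xi x z : K xi z -> (Defs.edist (f xi x z) C <= nu K f C xi x)%E.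
  by move=> Kz; apply: ereal_sup_ubound; exists z.
apply: ge_ereal_sup => _ [z Kz <-].
have [z1 [z2 [Kz1 [Kz2 ->]]]] := hK t xi1 xi2 t01w z Kz.
have := hf t xi1 x1 z1 xi2 x2 z2 t01w.
set F := f _ _ _; set F1 := f xi1 x1 z1; set F2 := f xi2 x2 z2 => Cc.
have -> : F = t *: F1 + (1 - t) *: F2 + (F - t *: F1 - (1 - t) *: F2).
  by apply/rowP => i; rewrite !mxE; ring.
rewrite edist_dist_to //.
apply: (@le_trans _ _ (t * dist_to C F1 + (1 - t) * dist_to C F2)%:E).
  rewrite lee_fin; apply: le_trans (dist_to_convex C_neq0 t F1 F2 hCcvx t01).
  exact: dist_to_addr_le C_neq0 _ _ (convex_cone_addr_closed hCcone hCcvx) Cc.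
have [t_ge0 t'_ge0] : 0 <= t /\ 0 <= 1 - t.
  by case/andP: t01w => -> ?; rewrite subr_ge0.
rewrite EFinD !EFinM; apply: leeD; apply: lee_wpmul2l; rewrite ?lee_fin //.
  by rewrite -edist_dist_to //; exact: edist_le_nu.
by rewrite -edist_dist_to //; exact: edist_le_nu.
Qed.
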